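(* Let $a<b$ be real numbers and let $f:[a,b]\to\mathbb{R}$ be a convex Riemann integrable function. Then for all $t\in[0,1]$, \[ f(tb+(1-t)a)\le (1-t)\int_0^{1}f\big(t\alpha(b-a)+a\big)\,d\alpha+t\int_0^{1}f\big((1-t)\alpha(b-a)+tb+(1-t)a\big)\, d\alpha \le tf(b)+(1-t)f(a). \] *)

From Stdlib Require Import Reals.
From Coquelicot Require Import Coquelicot.
Open Scope R_scope.

Definition convex_on (a b : R) (f : R -> R) : Prop :=
  forall x y l, a <= x <= b -> a <= y <= b -> 0 <= l <= 1 ->
    f (l * x + (1 - l) * y) <= l * f x + (1 - l) * f y.

(* Hermite-Hadamard: for f convex on [x, y], the mean of f over [x, y] lies between
   f ((x + y) / 2) and (f x + f y) / 2.  Both bounds follow by pairing the integrand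
   at al with its value at 1 - al.  Splitting [a, b] at c = t b + (1 - t) a and applying
   Hermite-Hadamard on [a, c] and [c, b], the weights 1 - t and t recombine through
   convexity: the midpoints (a + c) / 2 and (c + b) / 2 average back to c, and the
   endpoint values f c are bounded by t f b + (1 - t) f a. *)
From Stdlib Require Import Reals Lra.
From Coquelicot Require Import Coquelicot.
Open Scope R_scope.

(* The mean value of f over [x, y], rescaled to [0, 1] so that it also makes sense
   (and equals f x) when x = y. *)
Definition average (f : R -> R) (x y : R) : R :=
  RInt (fun al => f ((y - x) * al + x)) 0 1.

Lemma ex_RInt_average (f : R -> R) (x y : R) :
  ex_RInt f x y -> ex_RInt (fun al => f ((y - x) * al + x)) 0 1.
Proof.
  intros Hf.
  destruct (Req_dec y x) as [-> | Hxy].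
  - apply (ex_RInt_ext (fun _ => f x)); [intros al _; f_equal; ring | apply ex_RInt_const].
  - assert (Hlin : ex_RInt f ((y - x) * 0 + x) ((y - x) * 1 + x)).
    { replace ((y - x) * 0 + x) with x by ring.
      replace ((y - x) * 1 + x) with y by ring. exact Hf. }
    pose proof (ex_RInt_scal _ 0 1 (/ (y - x)) (ex_RInt_comp_lin f (y - x) x 0 1 Hlin)) as Hs.
    revert Hs. apply ex_RInt_ext. intros al _.
    change (/ (y - x) * ((y - x) * f ((y - x) * al + x)) = f ((y - x) * al + x)).
    field. lra.
Qed.

Lemma ex_RInt_reflect01 (g : R -> R) :
  ex_RInt g 0 1 -> ex_RInt (fun al => g (1 - al)) 0 1.
Proof.
  intros Hg.
  apply (ex_RInt_ext (fun al => g ((0 - 1) * al + 1))).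
  - intros al _. f_equal. ring.
  - apply ex_RInt_average, ex_RInt_swap, Hg.
Qed.

Lemma RInt_reflect01 (g : R -> R) :
  ex_RInt g 0 1 -> RInt (fun al => g (1 - al)) 0 1 = RInt g 0 1.
Proof.
  intros Hg. apply is_RInt_unique.
  assert (Hlin : is_RInt g (-1 * 0 + 1) (-1 * 1 + 1) (- RInt g 0 1)).
  { replace (-1 * 0 + 1) with 1 by ring. replace (-1 * 1 + 1) with 0 by ring.
    exact (is_RInt_swap _ _ _ _ (RInt_correct _ _ _ Hg)). }
  pose proof (is_RInt_scal _ 0 1 (-1) _ (is_RInt_comp_lin g (-1) 1 0 1 _ Hlin)) as Hs.
  replace (RInt g 0 1) with (-1 * - RInt g 0 1) by ring.
  revert Hs. apply is_RInt_ext. intros al _.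
  change (-1 * (-1 * g (-1 * al + 1)) = g (1 - al)).
  replace (-1 * al + 1) with (1 - al) by ring. ring.
Qed.

Lemma ex_RInt_symmetrize01 (g : R -> R) :
  ex_RInt g 0 1 -> ex_RInt (fun al => (g al + g (1 - al)) / 2) 0 1.
Proof.
  intros Hg.
  pose proof (ex_RInt_scal _ 0 1 (/ 2) (ex_RInt_plus _ _ 0 1 Hg (ex_RInt_reflect01 g Hg))) as Hs.
  revert Hs. apply ex_RInt_ext. intros al _.
  change (/ 2 * (g al + g (1 - al)) = (g al + g (1 - al)) / 2). field.
Qed.

Lemma RInt_symmetrize01 (g : R -> R) :
  ex_RInt g 0 1 -> RInt g 0 1 = RInt (fun al => (g al + g (1 - al)) / 2) 0 1.
Proof.
  intros Hg. symmetry. apply is_RInt_unique.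
  pose proof (RInt_correct _ _ _ (ex_RInt_reflect01 g Hg)) as Hr.
  rewrite RInt_reflect01 in Hr by exact Hg.
  pose proof (is_RInt_scal _ 0 1 (/ 2) _ (is_RInt_plus _ _ 0 1 _ _ (RInt_correct _ _ _ Hg) Hr))
    as Hs.
  replace (RInt g 0 1) with (/ 2 * (RInt g 0 1 + RInt g 0 1)) by field.
  revert Hs. apply is_RInt_ext. intros al _.
  change (/ 2 * (g al + g (1 - al)) = (g al + g (1 - al)) / 2). field.
Qed.

Lemma RInt01_const (c : R) : RInt (fun _ => c) 0 1 = c.
Proof. rewrite RInt_const. change ((1 - 0) * c = c). ring. Qed.

Lemma const_le_RInt01 (c : R) (h : R -> R) :
  ex_RInt h 0 1 -> (forall al, 0 <= al <= 1 -> c <= h al) -> c <= RInt h 0 1.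
Proof.
  intros Hh Hle.
  rewrite <- (RInt01_const c).
  apply RInt_le; [lra | apply ex_RInt_const | exact Hh |].
  intros al Hal. apply Hle. lra.
Qed.

Lemma RInt01_le_const (c : R) (h : R -> R) :
  ex_RInt h 0 1 -> (forall al, 0 <= al <= 1 -> h al <= c) -> RInt h 0 1 <= c.
Proof.
  intros Hh Hle.
  rewrite <- (RInt01_const c).
  apply RInt_le; [lra | exact Hh | apply ex_RInt_const |].
  intros al Hal. apply Hle. lra.
Qed.

Lemma convex_on_subinterval (a b x y : R) (f : R -> R) :
  a <= x -> y <= b -> convex_on a b f -> convex_on x y f.
Proof. intros Hax Hyb Hconv u v l Hu Hv Hl. apply Hconv; lra. Qed.

Section HermiteHadamard.

Variables (x y : R) (f : R -> R).
Hypotheses (Hxy : x <= y) (Hconv : convex_on x y f) (Hint : ex_RInt f x y).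

Lemma affine01_mem (al : R) : 0 <= al <= 1 -> x <= (y - x) * al + x <= y.
Proof. intros Hal. split; nra. Qed.

Lemma convex_on_affine01 (al : R) :
  0 <= al <= 1 -> f ((y - x) * al + x) <= (1 - al) * f x + al * f y.
Proof.
  intros Hal.
  pose proof (Hconv y x al ltac:(lra) ltac:(lra) Hal) as Hc.
  replace (al * y + (1 - al) * x) with ((y - x) * al + x) in Hc by ring.
  lra.
Qed.

Lemma hermite_hadamard_left : f ((x + y) / 2) <= average f x y.
Proof.
  unfold average. rewrite RInt_symmetrize01 by now apply ex_RInt_average.
  apply const_le_RInt01; [now apply ex_RInt_symmetrize01, ex_RInt_average |].
  intros al Hal.
  pose proof (Hconv _ _ (/ 2) (affine01_mem al Hal) (affine01_mem (1 - al) ltac:(lra))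
                ltac:(lra)) as Hc.
  replace (/ 2 * ((y - x) * al + x) + (1 - / 2) * ((y - x) * (1 - al) + x))
    with ((x + y) / 2) in Hc by field.
  lra.
Qed.

Lemma hermite_hadamard_right : average f x y <= (f x + f y) / 2.
Proof.
  unfold average. rewrite RInt_symmetrize01 by now apply ex_RInt_average.
  apply RInt01_le_const; [now apply ex_RInt_symmetrize01, ex_RInt_average |].
  intros al Hal.
  pose proof (convex_on_affine01 al Hal).
  pose proof (convex_on_affine01 (1 - al) ltac:(lra)).
  lra.
Qed.

End HermiteHadamard.

Theorem theorem2p1 (a b : R) (f : R -> R) (hab : a < b)
  (hconv : convex_on a b f) (hint : ex_RInt f a b) (t : R) (ht : 0 <= t <= 1) :
  f (t * b + (1 - t) * a)
    <= (1 - t) * RInt (fun al => f (t * al * (b - a) + a)) 0 1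
       + t * RInt (fun al => f ((1 - t) * al * (b - a) + t * b + (1 - t) * a)) 0 1
  /\
  (1 - t) * RInt (fun al => f (t * al * (b - a) + a)) 0 1
       + t * RInt (fun al => f ((1 - t) * al * (b - a) + t * b + (1 - t) * a)) 0 1
    <= t * f b + (1 - t) * f a.
Proof.
  set (c := t * b + (1 - t) * a).
  assert (Hc : a <= c <= b).
  { assert (0 <= t * (b - a)) by (apply Rmult_le_pos; lra).
    unfold c; split; nra. }
  rewrite (RInt_ext _ (fun al => f ((c - a) * al + a))) by
    (intros al _; f_equal; unfold c; ring).
  rewrite (RInt_ext (fun al => f ((1 - t) * al * (b - a) + t * b + (1 - t) * a))
                    (fun al => f ((b - c) * al + c))) by
    (intros al _; f_equal; unfold c; ring).
  fold (average f a c) (average f c b).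
  assert (Hac : convex_on a c f) by (apply (convex_on_subinterval a b); lra || exact hconv).
  assert (Hcb : convex_on c b f) by (apply (convex_on_subinterval a b); lra || exact hconv).
  assert (Iac : ex_RInt f a c) by (apply (ex_RInt_Chasles_1 f a c b); [lra | exact hint]).
  assert (Icb : ex_RInt f c b) by (apply (ex_RInt_Chasles_2 f a c b); [lra | exact hint]).
  pose proof (hermite_hadamard_left a c f ltac:(lra) Hac Iac).
  pose proof (hermite_hadamard_left c b f ltac:(lra) Hcb Icb).
  pose proof (hermite_hadamard_right a c f ltac:(lra) Hac Iac).
  pose proof (hermite_hadamard_right c b f ltac:(lra) Hcb Icb).
  assert (Hfc : f c <= t * f b + (1 - t) * f a) by (apply hconv; lra).
  assert (Hmid : f c <= (1 - t) * f ((a + c) / 2) + t * f ((c + b) / 2)).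
  { pose proof (hconv ((a + c) / 2) ((c + b) / 2) (1 - t)) as Hconv_mid.
    replace ((1 - t) * ((a + c) / 2) + (1 - (1 - t)) * ((c + b) / 2)) with c
      in Hconv_mid by (unfold c; field).
    replace (1 - (1 - t)) with t in Hconv_mid by ring.
    apply Hconv_mid; lra. }
  split; nra.
Qed.
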